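(* Let $\hat\beta$ be the Exclusive Lasso estimate, let $\mathcal{E} = \left\{ i : \frac{|X_i^T (y - X\hat\beta)|}{\|\hat\beta_g\|_1} = \lambda \right\}$ (with $g$ the group containing $i$) be the weighted equicorrelation set, and let $\gamma'$ be the vector with entries $\gamma'_i = \|\hat\beta_g\|_1 - |\hat\beta_i|$ for $i \in \mathcal{E}$, $i \in g$. Then $$\hat\beta_{\mathcal{E}} = (X_{\mathcal{E}}^T X_{\mathcal{E}} + \lambda I)^{-1}\left[X_{\mathcal{E}}^T y - \lambda \gamma' s\right] \quad\text{and}\quad \hat\beta_{\mathcal{E}^c} = 0,$$ where $s \in \{-1,1\}^{|\mathcal{E}|}$ is a vector of signs that satisfies the optimality conditions, $\gamma' s$ denotes the elementwise product, and $\mathcal{E}^c$ is the complement of $\mathcal{E}$.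
   Context: Linear model $y = X\beta^* + \epsilon$ with $X \in \mathbb{R}^{n\times p}$, centered response, and a collection $\mathcal{G}$ of non-overlapping groups partitioning $\{1,\dots,p\}$. The Exclusive Lasso estimate is $\hat\beta = \arg\min_\beta \frac{1}{2}\|y - X\beta\|_2^2 + \lambda \frac{1}{2}\sum_{g\in\mathcal{G}} \|\beta_g\|_1^2$ with $\lambda>0$. Its optimality conditions are $-X^T(y - X\hat\beta) + \lambda z = 0$ with $z_i = \mathrm{sign}(\hat\beta_i)\|\hat\beta_g\|_1$ if $\hat\beta_i \neq 0$ and $z_i \in [-\|\hat\beta_g\|_1, \|\hat\beta_g\|_1]$ if $\hat\beta_i = 0$, for $i \in g$. *)

From HB Require Import structures.
From mathcomp Require Import all_boot all_order all_algebra.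
Set Implicit Arguments. Unset Strict Implicit. Unset Printing Implicit Defensive.
Import Order.TTheory GRing.Theory Num.Theory.
Local Open Scope ring_scope.

(* Groups: a partition of the p indices is given by a labelling
   grp : 'I_p -> 'I_k (index i lies in group grp i). *)

Definition el_gnorm (R : numDomainType) (p k : nat) (grp : 'I_p -> 'I_k)
  (beta : 'cV[R]_p) (i : 'I_p) : R :=
  \sum_(j < p | grp j == grp i) `|beta j 0|.

Definition gl1 (R : numDomainType) (p k : nat) (grp : 'I_p -> 'I_k)
  (beta : 'cV[R]_p) (g : 'I_k) : R :=
  \sum_(j < p | grp j == g) `|beta j 0|.

Definition sqnorm (R : numDomainType) (n : nat) (v : 'cV[R]_n) : R :=
  \sum_(i < n) (v i 0) ^+ 2.

Definition el_obj (R : realFieldType) (n p k : nat) (grp : 'I_p -> 'I_k)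
  (X : 'M[R]_(n, p)) (y : 'cV[R]_n) (lambda : R) (beta : 'cV[R]_p) : R :=
  2^-1 * sqnorm (y - X *m beta)
  + lambda * (2^-1 * \sum_(g < k) (gl1 grp beta g) ^+ 2).

Definition equicorr (R : realFieldType) (n p k : nat) (grp : 'I_p -> 'I_k)
  (X : 'M[R]_(n, p)) (y : 'cV[R]_n) (lambda : R) (beta : 'cV[R]_p)
  : {set 'I_p} :=
  [set i | `|(X^T *m (y - X *m beta)) i 0| / el_gnorm grp beta i == lambda].

From HB Require Import structures.
From mathcomp Require Import all_boot all_order all_algebra.
From mathcomp Require Import ring lra.
Set Implicit Arguments. Unset Strict Implicit. Unset Printing Implicit Defensive.
Import Order.TTheory GRing.Theory Num.Theory.
Local Open Scope ring_scope.

(* Write A := X^T (y - X beta) for the residual correlations.  Moving a nonzero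
   coordinate of a minimiser by u in the direction of its sign changes the objective
   by u (lambda ||beta_g||_1 - sg(beta_i) A_i) + O(u^2), so the linear coefficient
   vanishes: A_i = lambda sg(beta_i) ||beta_g||_1.  Hence every i in the support lies
   in E, and on E the signs s := sg(A) satisfy s beta = |beta|.  Writing
   beta_i = s_i |beta_i| turns the equations A_i = lambda s_i ||beta_g||_1 on E into
   (X_E^T X_E + lambda I) beta_E = X_E^T y - lambda gamma' s, and that matrix is
   positive definite. *)

Lemma linear_coef_eq0 (R : realFieldType) (a b d : R) : 0 < d ->
  (forall u, `|u| < d -> 0 <= u * a + u ^+ 2 * b) -> a = 0.
Proof.
move=> d_gt0 quad_ge0; apply/eqP; apply: contraT => a_neq0.
have a_gt0 : 0 < `|a| by rewrite normr_gt0.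
have b_ge0 := normr_ge0 b.
set D := 2 * (`|b| * d + `|a|).
have D_gt0 : 0 < D by rewrite /D; nra.
set w := d / D.
have w_gt0 : 0 < w by rewrite divr_gt0.
have wb_lt1 : w * b < 1.
  apply: le_lt_trans (ler_wpM2l (ltW w_gt0) (ler_norm b)) _.
  by rewrite /w mulrAC ltr_pdivrMr // mul1r /D; nra.
have aw_lt_d : `|- a * w| < d.
  by rewrite normrM normrN gtr0_norm // /w mulrA ltr_pdivrMr // /D; nra.
have := quad_ge0 _ aw_lt_d.
have -> : - a * w * a + (- a * w) ^+ 2 * b = - (a ^+ 2 * w * (1 - w * b)) by ring.
have sqa_gt0 : 0 < a ^+ 2 by rewrite lt_def sqr_ge0 sqrf_eq0 a_neq0.
by rewrite oppr_ge0 leNgt !(mulr_gt0 (mulr_gt0 sqa_gt0 w_gt0)) // subr_gt0.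
Qed.

Lemma normrD_sgZ (R : realDomainType) (x u : R) :
  `|u| < `|x| -> `|x + Num.sg x * u| = `|x| + u.
Proof.
case/ltr_normlP; case: (ltrgt0P x) => [x_gt0|x_lt0|->] lt_Nu lt_u.
- by rewrite gtr0_sg // mul1r gtr0_norm //; lra.
- by rewrite ltr0_sg // mulN1r ltr0_norm //; lra.
- lra.
Qed.

Lemma sqnorm_subZ (R : numDomainType) (n : nat) (r c : 'cV[R]_n) (t : R) :
  sqnorm (r - t *: c) =
  sqnorm r - 2 * t * (\sum_m r m 0 * c m 0) + t ^+ 2 * sqnorm c.
Proof.
rewrite /sqnorm !mulr_sumr -sumrB -big_split /=.
by apply: eq_bigr => m _; rewrite !mxE; ring.
Qed.

Lemma normr_le_el_gnorm (R : numDomainType) (p k : nat) (grp : 'I_p -> 'I_k)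
  (beta : 'cV[R]_p) i : `|beta i 0| <= el_gnorm grp beta i.
Proof. by rewrite /el_gnorm (bigD1 i) //= lerDl sumr_ge0. Qed.

Lemma el_gnorm_gt0 (R : numDomainType) (p k : nat) (grp : 'I_p -> 'I_k)
  (beta : 'cV[R]_p) i : beta i 0 != 0 -> 0 < el_gnorm grp beta i.
Proof.
by move=> beta_i_neq0; rewrite (lt_le_trans _ (normr_le_el_gnorm grp beta i)) ?normr_gt0.
Qed.

Lemma gram_add_scalar_unitmx (R : realFieldType) (n m : nat) (Y : 'M[R]_(n, m)) l :
  0 < l -> Y^T *m Y + l%:M \in unitmx.
Proof.
move=> l_gt0; rewrite -row_free_unit; apply: inj_row_free => v vM0.
have sum_sqr d (w : 'rV[R]_d) : (w *m w^T) 0 0 = \sum_j w 0 j ^+ 2.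
  by rewrite mxE; apply: eq_bigr => j _; rewrite mxE expr2.
have : (v *m (Y^T *m Y + l%:M) *m v^T) 0 0 = 0 by rewrite vM0 mul0mx mxE.
have -> : v *m (Y^T *m Y + l%:M) *m v^T = (v *m Y^T) *m (v *m Y^T)^T + l *: (v *m v^T).
  by rewrite mulmxDr mul_mx_scalar mulmxDl -scalemxAl !mulmxA trmx_mul trmxK mulmxA.
have sqr_sum_ge0 d (w : 'rV[R]_d) : 0 <= \sum_j w 0 j ^+ 2.
  by apply: sumr_ge0 => j _; apply: sqr_ge0.
rewrite mxE [in X in _ + X]mxE !sum_sqr => /eqP.
rewrite paddr_eq0 ?mulr_ge0 ?(ltW l_gt0) // => /andP[_].
rewrite mulf_eq0 gt_eqF //= => /eqP/psumr_eq0P v0.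
apply/rowP => j; rewrite mxE; apply/eqP; rewrite -sqrf_eq0 v0 // => {}j _.
exact: sqr_ge0.
Qed.

Lemma colsub_normal_eq (R : numDomainType) (n p : nat) (E : {set 'I_p})
    (X : 'M[R]_(n, p)) (y : 'cV[R]_n) (lambda : R) (beta : 'cV[R]_p)
    (G : 'I_p -> R) (s : 'cV[R]_#|E|) :
  (forall i, i \notin E -> beta i 0 = 0) ->
  (forall j, s j 0 ^+ 2 = 1) ->
  (forall j, s j 0 * beta (enum_val j) 0 = `|beta (enum_val j) 0|) ->
  (forall j, (X^T *m (y - X *m beta)) (enum_val j) 0 = lambda * (s j 0 * G (enum_val j))) ->
  let XE := \matrix_(i < n, j < #|E|) X i (enum_val j) in
  (XE^T *m XE + lambda%:M) *m (\col_j beta (enum_val j) 0) =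
  XE^T *m y - lambda *: \col_j ((G (enum_val j) - `|beta (enum_val j) 0|) * s j 0).
Proof.
move=> beta_supp s_sq s_beta s_corr XE.
have XE_beta : XE *m (\col_j beta (enum_val j) 0) = X *m beta.
  apply/colP => i; rewrite !mxE (bigID (mem E)) /= [X in _ = _ + X]big1; last first.
    by move=> j /beta_supp ->; rewrite mulr0.
  rewrite addr0 (big_enum_val (fun j => X i j * beta j 0)).
  by apply: eq_bigr => j _; rewrite !mxE.
have XEt v j : (XE^T *m v) j 0 = (X^T *m v) (enum_val j) 0.
  by rewrite !mxE; apply: eq_bigr => m _; rewrite !mxE.
set C := \col_j ((G (enum_val j) - _) * s j 0).
have XEt_corr : XE^T *m (y - X *m beta) = lambda *: (\col_j beta (enum_val j) 0 + C).
  apply/colP => j; rewrite XEt s_corr !mxE.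
  have beta_sgn : beta (enum_val j) 0 = s j 0 * `|beta (enum_val j) 0|.
    by rewrite -s_beta mulrA -expr2 s_sq mul1r.
  by rewrite {1}beta_sgn; ring.
rewrite mulmxDl -mulmxA XE_beta mul_scalar_mx.
rewrite -[XE^T *m y](subrK (XE^T *m (X *m beta))) -mulmxBr XEt_corr scalerDr.
by rewrite addrAC addrK addrC.
Qed.

Section ExclusiveLasso.

Variables (R : realFieldType) (n p k : nat) (grp : 'I_p -> 'I_k).
Variables (X : 'M[R]_(n, p)) (y : 'cV[R]_n) (lambda : R).

Local Notation corr beta := (X^T *m (y - X *m beta)).
Local Notation obj := (el_obj grp X y lambda).

Lemma gl1_addZdelta (beta : 'cV[R]_p) i t g :
  gl1 grp (beta + t *: delta_mx i 0) g =
  gl1 grp beta g + (if grp i == g then `|beta i 0 + t| - `|beta i 0| else 0).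
Proof.
have off_i j : j != i -> `|(beta + t *: delta_mx i 0) j 0| = `|beta j 0|.
  by move=> ji; rewrite !mxE (negbTE ji) mulr0 addr0.
rewrite /gl1; case: ifP => [/eqP gi | gi].
  rewrite (bigD1 i) ?gi //= [in RHS](bigD1 i) ?gi //= !mxE !eqxx mulr1.
  rewrite (eq_bigr (fun j => `|beta j 0|)); first ring.
  by move=> j /andP[_ /off_i].
rewrite addr0; apply: eq_bigr => j /eqP gj; apply: off_i.
by apply: contraFneq gi => <-; apply/eqP.
Qed.

Lemma el_obj_addZdelta (beta : 'cV[R]_p) i t :
  obj (beta + t *: delta_mx i 0) =
  obj beta - t * corr beta i 0 + t ^+ 2 / 2 * sqnorm (col i X)
  + lambda / 2 * ((el_gnorm grp beta i + (`|beta i 0 + t| - `|beta i 0|)) ^+ 2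
                  - el_gnorm grp beta i ^+ 2).
Proof.
rewrite /el_obj.
have -> : y - X *m (beta + t *: delta_mx i 0) = (y - X *m beta) - t *: col i X.
  by rewrite mulmxDr -scalemxAr colE opprD addrA.
rewrite sqnorm_subZ.
have -> : \sum_m (y - X *m beta) m 0 * col i X m 0 = corr beta i 0.
  by rewrite mxE; apply: eq_bigr => m _; rewrite !mxE mulrC.
rewrite (bigD1 (grp i)) //= [in RHS](bigD1 (grp i)) //=.
rewrite gl1_addZdelta eqxx.
rewrite (eq_bigr (fun g => gl1 grp beta g ^+ 2)); last first.
  by move=> g gi; rewrite gl1_addZdelta eq_sym (negbTE gi) addr0.
by rewrite /el_gnorm /gl1; field.
Qed.

Variable betahat : 'cV[R]_p.
Hypothesis lambda_gt0 : 0 < lambda.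
Hypothesis betahat_min : forall beta, obj betahat <= obj beta.

Lemma el_min_corr i : betahat i 0 != 0 ->
  corr betahat i 0 = lambda * (Num.sg (betahat i 0) * el_gnorm grp betahat i).
Proof.
move=> beta_i_neq0.
set s := Num.sg _; set A := corr _ i 0; set G := el_gnorm _ _ _.
have s_sq : s ^+ 2 = 1 by rewrite sqr_sg beta_i_neq0.
suff : lambda * G - s * A = 0.
  move/eqP; rewrite subr_eq0 => /eqP lamG.
  by rewrite mulrCA lamG mulrA -expr2 s_sq mul1r.
apply: (@linear_coef_eq0 _ _ ((sqnorm (col i X) + lambda) / 2) `|betahat i 0|).
  by rewrite normr_gt0.
move=> u lt_u.
have expand : obj (betahat + (s * u) *: delta_mx i 0) - obj betahat =
              u * (lambda * G - s * A) + u ^+ 2 * ((sqnorm (col i X) + lambda) / 2).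
  by rewrite el_obj_addZdelta normrD_sgZ // exprMn s_sq mul1r -/A -/G; field.
by rewrite -expand subr_ge0.
Qed.

Local Notation E := (equicorr grp X y lambda betahat).

Lemma notin_equicorr_eq0 i : i \notin E -> betahat i 0 = 0.
Proof.
apply: contraNeq => beta_i_neq0.
have G_gt0 := el_gnorm_gt0 grp beta_i_neq0.
rewrite inE el_min_corr // !normrM normr_sg beta_i_neq0 mul1r.
by rewrite !gtr0_norm // mulfK // gt_eqF.
Qed.

Lemma equicorr_normr i : i \in E -> `|corr betahat i 0| = lambda * el_gnorm grp betahat i.
Proof.
rewrite inE => /eqP eq_lambda; rewrite -eq_lambda divfK //.
by apply: contraTneq lambda_gt0 => G0; rewrite -eq_lambda G0 invr0 mulr0 ltxx.
Qed.

Lemma equicorr_corr_neq0 i : i \in E -> corr betahat i 0 != 0.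
Proof.
move=> iE; rewrite -normr_eq0 equicorr_normr // mulf_eq0 negb_or gt_eqF //=.
apply: contraTneq iE => G0; rewrite inE G0 invr0 mulr0 eq_sym gt_eqF //.
Qed.

Lemma sg_corr_mulr i : Num.sg (corr betahat i 0) * betahat i 0 = `|betahat i 0|.
Proof.
have [->|beta_i_neq0] := eqVneq (betahat i 0) 0; first by rewrite mulr0 normr0.
have G_gt0 := el_gnorm_gt0 grp beta_i_neq0.
rewrite el_min_corr // sgrM sgr_smul (gtr0_sg lambda_gt0) (gtr0_sg G_gt0).
by rewrite mul1r mulr1 -normrEsg.
Qed.

End ExclusiveLasso.

Theorem proposition2 (R : realFieldType) (n p k : nat) (grp : 'I_p -> 'I_k)
  (X : 'M[R]_(n, p)) (y : 'cV[R]_n) (lambda : R) (betahat : 'cV[R]_p) :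
  0 < lambda ->
  \sum_(i < n) y i 0 = 0 ->
  (forall beta : 'cV[R]_p,
      el_obj grp X y lambda betahat <= el_obj grp X y lambda beta) ->
  let E := equicorr grp X y lambda betahat in
  let XE : 'M[R]_(n, #|E|) := \matrix_(i < n, j < #|E|) X i (enum_val j) in
  let betaE : 'cV[R]_#|E| := \col_(j < #|E|) betahat (enum_val j) 0 in
  let gammaE : 'cV[R]_#|E| :=
    \col_(j < #|E|) (el_gnorm grp betahat (enum_val j) - `|betahat (enum_val j) 0|) in
  exists s : 'cV[R]_#|E|,
    (forall j, s j 0 = 1 \/ s j 0 = -1) /\
    (forall j, s j 0 * betahat (enum_val j) 0 = `|betahat (enum_val j) 0|) /\
    (forall j, (X^T *m (y - X *m betahat)) (enum_val j) 0
                 = lambda * (s j 0 * el_gnorm grp betahat (enum_val j))) /\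
    betaE = invmx (XE^T *m XE + lambda%:M)
              *m (XE^T *m y - lambda *: \col_(j < #|E|) (gammaE j 0 * s j 0)) /\
    (forall i, i \notin E -> betahat i 0 = 0).
Proof.
(* The response need not be centred. *)
move=> lambda_gt0 _ betahat_min E XE betaE gammaE.
pose corr := X^T *m (y - X *m betahat).
pose s := \col_(j < #|E|) Num.sg (corr (enum_val j) 0).
have s_pm1 j : s j 0 = 1 \/ s j 0 = -1.
  have := equicorr_corr_neq0 lambda_gt0 (enum_valP j).
  by rewrite [s j 0]mxE; case: ltrgt0P => [/gtr0_sg|/ltr0_sg|//]; auto.
have s_beta j : s j 0 * betahat (enum_val j) 0 = `|betahat (enum_val j) 0|.
  by rewrite [s j 0]mxE (sg_corr_mulr lambda_gt0 betahat_min).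
have s_corr j : corr (enum_val j) 0 = lambda * (s j 0 * el_gnorm grp betahat (enum_val j)).
  by rewrite [s j 0]mxE mulrCA -(equicorr_normr lambda_gt0 (enum_valP j)) -numEsg.
have beta_supp := notin_equicorr_eq0 lambda_gt0 betahat_min.
exists s; do ![split] => //.
have s_sq j : s j 0 ^+ 2 = 1 by case: (s_pm1 j) => ->; rewrite ?sqrrN expr1n.
have -> : \col_j (gammaE j 0 * s j 0) =
          \col_j ((el_gnorm grp betahat (enum_val j) - `|betahat (enum_val j) 0|) * s j 0).
  by apply/colP => j; rewrite !mxE.
by rewrite -colsub_normal_eq // mulKmx // gram_add_scalar_unitmx.
Qed.
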